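(* Let $(u_{n-1},u_{n-2},\dots,u_0)$ be a chain compatible with $(n-1,n-2,\dots,1)$ with $u_0=w_0$. Then $u_i\in S_n^{i\searrow}$ for every $i\in\{0,\dots,n-1\}$.
   Context: Permutations in one-line notation; $w_0=[n,\dots,1]$; $wt_{i,j}$ is $w$ with positions $i<j$ swapped; $\ell$ the number of inversions. $u\lessdot w$ iff $w=ut_{i,j}$, $i<j$, $\ell(w)=\ell(u)+1$; $u\lessdot_k w$ iff moreover $i\le k<j$. A $k$-chain $v_1\lessdot_k\cdots\lessdot_k v_d$ ($d\ge 1$) is increasing if the smaller of the two values exchanged at each step strictly increases along the chain. $(w_1,\dots,w_d)$ is compatible with $(k_1,\dots,k_{d-1})$ if for each $s$ there is an increasing $k_s$-chain from $w_s$ to $w_{s+1}$. $S_n^{k\searrow}=\{v\in S_n:v(k+1)>\dots>v(n)\}$ for $k\in\{0,\dots,n-1\}$. *)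

(* Permutations of {1..n} are represented as 'S_n (perms of
   'I_n = {0..n-1}); position p (1-indexed) is the ordinal p-1, and the
   one-line notation of w is [w 0; ...; w (n-1)] (values shifted down by 1). *)
From mathcomp Require Import all_boot all_order all_fingroup.
Set Implicit Arguments. Unset Strict Implicit. Unset Printing Implicit Defensive.

Definition ell n (w : 'S_n) : nat :=
  #|[set pq : 'I_n * 'I_n | (pq.1 < pq.2) && (w pq.2 < w pq.1)]|.

Definition w0 n : 'S_n := perm (@rev_ord_inj n).

(* u <._k w with label a = the smaller of the two exchanged values:
   w = u t_{i,j} (positions i<j swapped), i <= k < j in 1-indexed positions,
   i.e. i < k <= j for 0-indexed ordinals, and ell w = ell u + 1. *)
Definition kcover n (k : nat) (u w : 'S_n) (a : nat) : Prop :=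
  exists i j : 'I_n,
    [/\ i < j, i < k <= j,
        (forall p, w p = u (tperm i j p)),
        ell w = (ell u).+1
      & a = minn (u i) (u j)].

(* increasing k-chain u = v_1 <._k v_2 <._k ... <._k v_d = w (d >= 1),
   vs = [v_2; ...; v_d], ls = labels of the successive steps *)
Definition inc_kchain n (k : nat) (u w : 'S_n) : Prop :=
  exists (vs : seq 'S_n) (ls : seq nat),
    [/\ size ls = size vs,
        last u vs = w,
        (forall t, t < size vs ->
           kcover k (nth u (u :: vs) t) (nth u vs t) (nth 0 ls t))
      & sorted ltn ls].

Definition compatible n (ws : seq 'S_n) (ks : seq nat) : Prop :=
  [/\ 0 < size ws, size ks = (size ws).-1
    & forall s, s < size ks ->
        inc_kchain (nth 0 ks s) (nth 1%g ws s) (nth 1%g ws s.+1)].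

(* S_n^{k\searrow} : v(k+1) > ... > v(n)  (1-indexed positions) *)
Definition Sdesc n (k : nat) (v : 'S_n) : Prop :=
  forall p q : 'I_n, k <= p -> p < q -> v q < v p.

From mathcomp Require Import all_boot all_order all_fingroup.
From mathcomp Require Import zify.
Set Implicit Arguments. Unset Strict Implicit. Unset Printing Implicit Defensive.

(* If u <._k w = u t_{i,j} is a cover, then u(i) < u(j) and no position strictly
   between i and j carries a value between u(i) and u(j): otherwise the
   transposition would raise the number of inversions by at least two.
   Consequently, if w is decreasing on the positions k+1, ..., n, so is u: the
   value w(i) that moves to position j fits between its new neighbours.
   Walking the compatible chain down from u_0 = w_0: u_i lies in
   S_n^{i\searrow}, which is contained in S_n^{(i+1)\searrow}, and u_{i+1} is
   joined to u_i by an (i+1)-chain, so u_{i+1} lies in S_n^{(i+1)\searrow}. *)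

Definition inversions n (z : 'S_n) : {set 'I_n * 'I_n} :=
  [set pq : 'I_n * 'I_n | (pq.1 < pq.2) && (z pq.2 < z pq.1)].

Definition between n (x : 'S_n) (a b : 'I_n) : {set 'I_n} :=
  [set c : 'I_n | (a < c <= b) && (x a < x c <= x b)].

Section TranspositionLength.
Variables (n : nat) (x y : 'S_n) (a b : 'I_n).
Hypotheses (lt_ab : a < b) (lt_xab : x a < x b).
Hypothesis yE : forall p, y p = x (tperm a b p).

Definition tperm_pair (pq : 'I_n * 'I_n) : 'I_n * 'I_n :=
  if tperm a b pq.1 < tperm a b pq.2 then (tperm a b pq.1, tperm a b pq.2) else pq.

Lemma tperm_pair_inj : {in inversions x &, injective tperm_pair}.
Proof.
move=> [p q] [p' q']; rewrite !inE /= => /andP[pq _] /andP[pq' _].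
rewrite /tperm_pair /=; case: ifP => h1; case: ifP => h2 [e1 e2].
- by rewrite -(tpermK a b p) e1 tpermK -(tpermK a b q) e2 tpermK.
- by move: h2; rewrite -e1 -e2 !tpermK pq.
- by move: h1; rewrite e1 e2 !tpermK pq'.
- by rewrite e1 e2.
Qed.

Lemma tperm_pair_inversion pq :
  pq \in inversions x -> tperm_pair pq \in inversions y.
Proof.
case: pq => p q; rewrite !inE /= => /andP[pq xqp].
rewrite /tperm_pair /=; case: ifP => h; rewrite /= !yE.
  by rewrite h !tpermK.
rewrite pq /=; move: h.
by case: (tpermP a b p) => [?|?|_ _]; case: (tpermP a b q) => [?|?|_ _]; subst; lia.
Qed.

Lemma tperm_pair_neq pq (c : 'I_n) :
  pq \in inversions x -> a < c <= b -> x a < x c -> tperm_pair pq != (a, c).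
Proof.
case: pq => p q; rewrite !inE /= => /andP[pq xqp] /andP[ac cb] xac.
rewrite /tperm_pair /=; case: ifP => _; apply/negP => /eqP [e1 e2].
- move: pq; rewrite -(tpermK a b p) -(tpermK a b q) e1 e2 tpermL.
  by case: (tpermP a b c) => [?|?|_ _]; subst; lia.
- by move: xqp; rewrite e1 e2; lia.
Qed.

(* The inversions (a, c) of y with c in [between x a b] are missed by
   [tperm_pair]. *)
Lemma ell_tperm_ge : ell x + #|between x a b| <= ell y.
Proof.
set P := tperm_pair @: inversions x; set A := [set (a, c) | c in between x a b].
have cardP : #|P| = ell x by rewrite card_in_imset //; exact: tperm_pair_inj.
have cardA : #|A| = #|between x a b| by rewrite card_imset // => c c' [].
have disjPA : P :&: A = set0.
  apply/setP => z; rewrite !inE; apply/negP => /andP[/imsetP[pq pq_inv ->]].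
  case/imsetP=> c; rewrite inE => /andP[acb /andP[xac _]] /eqP.
  by rewrite (negPf (tperm_pair_neq pq_inv acb xac)).
have subA : A \subset inversions y.
  apply/subsetP => ? /imsetP[c]; rewrite !inE => /andP[/andP[ac cb] xacb] ->.
  rewrite /= ac !yE tpermL; case: (tpermP a b c) => [ca|//|_ cb'].
    by move: ac; rewrite ca ltnn.
  by rewrite ltn_neqAle val_eqE (inj_eq perm_inj) (introF eqP cb') /=; lia.
have subP : P \subset inversions y.
  by apply/subsetP => ? /imsetP[pq pq_inv ->]; exact: tperm_pair_inversion.
rewrite -cardP -cardA -cardsUI disjPA cards0 addn0.
by apply: subset_leq_card; rewrite subUset subP subA.
Qed.

End TranspositionLength.

Lemma between_max n (x : 'S_n) (a b : 'I_n) :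
  a < b -> x a < x b -> b \in between x a b.
Proof. by move=> ab xab; rewrite inE ab xab !leqnn. Qed.

Section BruhatCover.
Variables (n : nat) (u w : 'S_n) (i j : 'I_n).
Hypotheses (lt_ij : i < j) (wE : forall p, w p = u (tperm i j p)).
Hypothesis ell_w : ell w = (ell u).+1.

Lemma cover_tperm_lt : u i < u j.
Proof.
have uE p : u p = w (tperm i j p) by rewrite wE tpermK.
case: (ltngtP (u i) (u j)) => // [lt_uji | /val_inj/perm_inj eq_ij].
  have lt_wij : w i < w j by rewrite !wE tpermL tpermR.
  have := ell_tperm_ge lt_ij lt_wij uE.
  by rewrite (cardsD1 j) (between_max lt_ij lt_wij) ell_w; lia.
by move: lt_ij; rewrite eq_ij ltnn.
Qed.

Lemma cover_tperm_gap (c : 'I_n) : i < c < j -> u i < u c -> u j < u c.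
Proof.
move=> /andP[ic cj] uic; have uij := cover_tperm_lt.
case: (ltngtP (u j) (u c)) => // [lt_ucj | /val_inj/perm_inj eq_jc].
  have sub : [set c; j] \subset between u i j.
    by rewrite subUset !sub1set between_max // inE ic ltnW // uic ltnW.
  have := ell_tperm_ge lt_ij uij wE.
  have := subset_leq_card sub; rewrite cards2 neq_ltn cj /= ell_w.
  by move=> /(leq_add (leqnn (ell u)))/leq_trans/[apply]; rewrite addn2 ltnn.
by move: cj; rewrite eq_jc ltnn.
Qed.

End BruhatCover.

Lemma Sdesc_mono n k k' (v : 'S_n) : k <= k' -> Sdesc k v -> Sdesc k' v.
Proof. by move=> kk' desc p q k'p; apply: desc; exact: leq_trans kk' k'p. Qed.

Lemma Sdesc_w0 n : Sdesc 0 (w0 n).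
Proof. by move=> p q _ pq; rewrite !permE /=; have := ltn_ord q; lia. Qed.

Lemma Sdesc_kcover n k (u w : 'S_n) l : kcover k u w l -> Sdesc k w -> Sdesc k u.
Proof.
case=> i [j] [ij /andP[ik kj] wE ell_w _] desc_w.
have uE p : u p = w (tperm i j p) by rewrite wE tpermK.
have wji : w j < w i by rewrite !wE tpermL tpermR (cover_tperm_lt ij wE ell_w).
have gap (c : 'I_n) : i < c < j -> w j < w c -> w i < w c.
  move=> icj; have /andP[ic cj] := icj.
  rewrite !wE tpermL tpermR tpermD ?(neq_ltn i c) ?(neq_ltn j c) ?ic ?cj ?orbT //.
  exact: cover_tperm_gap.
move=> p q kp pq; rewrite !uE.
have ip : i != p by rewrite neq_ltn (leq_trans ik kp).
have iq : i != q by rewrite neq_ltn (leq_trans ik (leq_trans kp (ltnW pq))).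
case: (tpermP i j p) => [pi|pj|_ _]; first by rewrite pi eqxx in ip.
  subst p; rewrite (tpermD iq) ?neq_ltn ?pq ?orbT //.
  exact: ltn_trans (desc_w _ _ kj pq) wji.
case: (tpermP i j q) => [qi|qj|_ _]; first by rewrite qi eqxx in iq.
  by subst q; apply: gap; [rewrite (leq_trans ik kp) | exact: desc_w].
exact: desc_w.
Qed.

Lemma Sdesc_inc_kchain n k (u w : 'S_n) : inc_kchain k u w -> Sdesc k w -> Sdesc k u.
Proof.
case=> vs [ls] [_ <- covers _].
elim: vs u ls covers => [|v vs IH] u ls covers //= desc.
apply: (Sdesc_kcover (covers 0 isT)); apply: (IH v (behead ls)) => // t lt_t.
have := covers t.+1 lt_t; rewrite nth_behead /=.
by rewrite [nth u (v :: vs) t](set_nth_default v) 1?[nth u vs t](set_nth_default v) //= ltnW.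
Qed.

Lemma compatible_chain_step n (u : nat -> 'S_n) i :
  compatible [seq u (n.-1 - s) | s <- iota 0 n] [seq n.-1 - s | s <- iota 0 n.-1] ->
  i.+1 < n -> inc_kchain i.+1 (u i.+1) (u i).
Proof.
case=> _ _ chains lt_in.
have := chains (n.-1 - i.+1); rewrite size_map size_iota.
rewrite !(nth_map 0) ?size_iota ?nth_iota; try lia.
have -> : n.-1 - (0 + (n.-1 - i.+1)) = i.+1 by lia.
have -> : n.-1 - (0 + (n.-1 - i.+1).+1) = i by lia.
by apply; lia.
Qed.

Theorem corollary3p8 (n : nat) (u : nat -> 'S_n) :
  compatible [seq u (n.-1 - s) | s <- iota 0 n]
             [seq n.-1 - s | s <- iota 0 n.-1] ->
  u 0 = w0 n ->
  forall i, i < n -> Sdesc i (u i).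
Proof.
move=> compat u0; elim=> [_ | i IH lt_in]; first by rewrite u0; exact: Sdesc_w0.
apply: (Sdesc_inc_kchain (compatible_chain_step compat lt_in)).
exact: Sdesc_mono (leqnSn i) (IH (ltnW lt_in)).
Qed.
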